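(* Consider the quadratic infinite-horizon dynamic multi-agent system described in the context. Suppose $(\mathbf A,\mathbf B)$ is controllable and there is $C>0$ with $C(t)\ge C$ for all $t\ge0$. Let $\mathbf P$ be the symmetric positive definite (stabilizing) solution of the discrete algebraic Riccati equation $\mathbf P=\mathbf A^\top\mathbf P\mathbf A+\mathbf Q-\mathbf A^\top\mathbf P\mathbf B(\mathbf B^\top\mathbf P\mathbf B+\mathbf R)^{-1}\mathbf B^\top\mathbf P\mathbf A$, let $\mathbf K=-(\mathbf R+\mathbf B^\top\mathbf P\mathbf B)^{-1}\mathbf B^\top\mathbf P\mathbf A$, assume $\mathbf K^\top\mathbf H\mathbf K\neq0$, and set $$\mathbb X_0=\Big\{\mathbf x(0)\in\mathbb R^{nd}:\ \|\mathbf x(0)\|^2\le\frac{C\,\sigma_{\min}(\mathbf P)}{\sigma_{\max}(\mathbf P)\,\sigma_{\max}(\mathbf K^\top\mathbf H\mathbf K)}\Big\}.$$ If $\mathbf x(0)\in\mathbb X_0$, then: (i) the infinite-horizon social welfare maximization problem is feasible and its optimal control input is given by the linear feedback $\mathbf u^\ast(t)=\mathbf K\mathbf x(t)$ for all $t\ge0$; (ii) there is an infinite-horizon competitive equilibrium whose price sequence is $\lambda^\ast_t=0$ for all $t\ge0$ (with control inputs given by this feedback).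
   Context: Quadratic infinite-horizon dynamic multi-agent system: $n$ agents $\mathcal V=\{1,\dots,n\}$, times $t=0,1,2,\dots$; agent $i$ has state $\mathbf x_i(t)\in\mathbb R^d$, input $\mathbf u_i(t)\in\mathbb R^m$, dynamics $\mathbf x_i(t+1)=\mathbf A_i\mathbf x_i(t)+\mathbf B_i\mathbf u_i(t)$, utility $f_i(\mathbf x,\mathbf u)=-\mathbf x^\top\mathbf Q_i\mathbf x-\mathbf u^\top\mathbf R_i\mathbf u$ and consumption $h_i(\mathbf u)=\mathbf u^\top\mathbf H_i\mathbf u$ with $\mathbf Q_i,\mathbf R_i,\mathbf H_i$ symmetric positive definite; excess resources $a_i(t)\in\mathbb R$, $C(t)=\sum_ia_i(t)$; traded resources $e_i(t)\in\mathbb R$. Stacked quantities: $\mathbf x(t)=(\mathbf x_1(t),\dots,\mathbf x_n(t))$, $\mathbf u(t)=(\mathbf u_1(t),\dots,\mathbf u_n(t))$, $\mathbf A=\mathrm{blockdiag}(\mathbf A_i)$, $\mathbf B=\mathrm{blockdiag}(\mathbf B_i)$, $\mathbf Q=\mathrm{blockdiag}(\mathbf Q_i)$, $\mathbf R=\mathrm{blockdiag}(\mathbf R_i)$, $\mathbf H=\mathrm{blockdiag}(\mathbf H_i)$. $\sigma_{\min},\sigma_{\max}$ denote smallest and largest eigenvalues of a symmetric matrix. An infinite-horizon competitive equilibrium for $\mathbf x(0)$ is a triple $(\boldsymbol\lambda^\ast,\mathbf U^\ast,\mathbf E^\ast)$, $\boldsymbol\lambda^\ast=(\lambda^\ast_t)_{t\ge0}$,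 such that (i) for each $i$, $((\mathbf u_i^\ast(t))_t,(e_i^\ast(t))_t)$ attains a finite maximum of $\sum_{t=0}^\infty[f_i(\mathbf x_i(t),\mathbf u_i(t))+\lambda^\ast_te_i(t)]$ subject to the dynamics and $e_i(t)\le a_i(t)-h_i(\mathbf u_i(t))$ for all $t$; (ii) $\sum_{i=1}^ne_i^\ast(t)=0$ for all $t$. The infinite-horizon social welfare maximization problem for $\mathbf x(0)$: maximize $\sum_{i=1}^n\sum_{t=0}^\infty f_i(\mathbf x_i(t),\mathbf u_i(t))$ over all inputs and trades subject to the dynamics, $e_i(t)\le a_i(t)-h_i(\mathbf u_i(t))$ and $\sum_{i=1}^ne_i(t)=0$ for all $t\ge0$; it is feasible if it has an admissible point and a finite optimal value. *)

From HB Require Import structures.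
From mathcomp Require Import all_boot all_order all_algebra.
From mathcomp Require Import all_classical all_reals all_analysis.
Set Implicit Arguments. Unset Strict Implicit. Unset Printing Implicit Defensive.
Import Order.TTheory GRing.Theory Num.Theory.
Import numFieldNormedType.Exports.
Local Open Scope classical_set_scope.
Local Open Scope ring_scope.

Section Defs.
Variable R : realType.

Definition quad (k : nat) (M : 'M[R]_k) (v : 'cV[R]_k) : R :=
  (v^T *m M *m v) ord0 ord0.

Definition normsq (k : nat) (v : 'cV[R]_k) : R := \sum_(j < k) v j ord0 ^+ 2.

Definition spd (k : nat) (M : 'M[R]_k) : Prop :=
  M^T = M /\ forall v : 'cV[R]_k, v != 0 -> 0 < quad M v.

Definition eigs (k : nat) (M : 'M[R]_k) : set R := [set a | eigenvalue M a].
Definition sigma_max (k : nat) (M : 'M[R]_k) : R := sup (eigs M).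
Definition sigma_min (k : nat) (M : 'M[R]_k) : R := inf (eigs M).

Definition bdiag (n p q : nat) (M : 'I_n -> 'M[R]_(p, q))
  : 'M[R]_(\sum_(i < n) p, \sum_(i < n) q) :=
  @mxblock R n n (fun _ => p) (fun _ => q)
    (fun i j => if i == j then M i else 0).

Definition blk (n p : nat) (v : 'cV[R]_(\sum_(i < n) p)) (i : 'I_n) : 'cV[R]_p :=
  @submxcol R n (fun _ => p) 1 v i.

Definition controllable (N M : nat) (A : 'M[R]_N) (B : 'M[R]_(N, M)) : bool :=
  \rank (\mxrow_(k < N) (A ^+ k *m B)) == N.

Definition DARE (N M : nat) (A : 'M[R]_N) (B : 'M[R]_(N, M)) (Q : 'M[R]_N)
  (Rm : 'M[R]_M) (P : 'M[R]_N) : Prop :=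
  P = A^T *m P *m A + Q
      - A^T *m P *m B *m invmx (B^T *m P *m B + Rm) *m B^T *m P *m A.

Definition gainK (N M : nat) (A : 'M[R]_N) (B : 'M[R]_(N, M)) (Rm : 'M[R]_M)
  (P : 'M[R]_N) : 'M[R]_(M, N) :=
  - (invmx (Rm + B^T *m P *m B) *m B^T *m P *m A).

Fixpoint traj (d m : nat) (A : 'M[R]_d) (B : 'M[R]_(d, m)) (x0 : 'cV[R]_d)
  (u : nat -> 'cV[R]_m) (t : nat) : 'cV[R]_d :=
  match t with
  | 0 => x0
  | t'.+1 => A *m traj A B x0 u t' + B *m u t'
  end.

(* infinite-horizon objective: limsup of partial sums (extended real).
   For sequences whose partial sums converge this is the series' value. *)
Definition objective (g : nat -> R) : \bar R :=
  limn_esup (fun T => (\sum_(t < T) g t)%:E).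

Definition sums_to (g : nat -> R) (l : R) : Prop :=
  (fun T => \sum_(t < T) g t) @ \oo --> l.

End Defs.

Section MAS.
Variables (R : realType) (n d m : nat)
  (A_ : 'I_n -> 'M[R]_d) (B_ : 'I_n -> 'M[R]_(d, m))
  (Q_ : 'I_n -> 'M[R]_d) (R_ : 'I_n -> 'M[R]_m) (H_ : 'I_n -> 'M[R]_m)
  (a : 'I_n -> nat -> R) (x0 : 'cV[R]_(\sum_(i < n) d)).

Definition util (i : 'I_n) (x : 'cV[R]_d) (u : 'cV[R]_m) : R :=
  - quad (Q_ i) x - quad (R_ i) u.
Definition cons (i : 'I_n) (u : 'cV[R]_m) : R := quad (H_ i) u.

Definition xstate (i : 'I_n) (u : nat -> 'cV[R]_m) : nat -> 'cV[R]_d :=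
  traj (A_ i) (B_ i) (blk x0 i) u.

Definition SW_admissible (u : 'I_n -> nat -> 'cV[R]_m) (e : 'I_n -> nat -> R) : Prop :=
  (forall i t, e i t <= a i t - cons i (u i t)) /\
  (forall t, \sum_(i < n) e i t = 0).

Definition SW_stage (u : 'I_n -> nat -> 'cV[R]_m) (t : nat) : R :=
  \sum_(i < n) util i (xstate i (u i) t) (u i t).

Definition SW_value : \bar R :=
  ereal_sup [set objective (SW_stage u) | u in
              [set u | exists e, SW_admissible u e]].

Definition SW_feasible : Prop :=
  (exists u e, SW_admissible u e) /\ SW_value \is a fin_num.

Definition SW_optimal (u : 'I_n -> nat -> 'cV[R]_m) (e : 'I_n -> nat -> R) : Prop :=
  SW_admissible u e /\
  exists l : R, sums_to (SW_stage u) l /\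
    forall u' e', SW_admissible u' e' -> (objective (SW_stage u') <= l%:E)%E.

Definition agent_admissible (i : 'I_n) (ui : nat -> 'cV[R]_m) (ei : nat -> R) : Prop :=
  forall t, ei t <= a i t - cons i (ui t).

Definition agent_stage (lam : nat -> R) (i : 'I_n) (ui : nat -> 'cV[R]_m)
  (ei : nat -> R) (t : nat) : R :=
  util i (xstate i ui t) (ui t) + lam t * ei t.

Definition agent_optimal (lam : nat -> R) (i : 'I_n) (ui : nat -> 'cV[R]_m)
  (ei : nat -> R) : Prop :=
  agent_admissible i ui ei /\
  exists l : R, sums_to (agent_stage lam i ui ei) l /\
    forall ui' ei', agent_admissible i ui' ei' ->
      (objective (agent_stage lam i ui' ei') <= l%:E)%E.

Definition competitive_eq (lam : nat -> R) (u : 'I_n -> nat -> 'cV[R]_m)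
  (e : 'I_n -> nat -> R) : Prop :=
  (forall i, agent_optimal lam i (u i) (e i)) /\
  (forall t, \sum_(i < n) e i t = 0).

End MAS.

(* Write V(x) = x^T P x.  Completing the square with the Riccati equation gives, for
   every state x and input u,
     x^T Q x + u^T R u = V(x) - V(A x + B u) + (u - K x)^T (R + B^T P B) (u - K x),
   so the accumulated cost of any input sequence is at least V(x(0)) - V(x(T)), with
   equality for the feedback u = K x.  Along the closed loop V decreases geometrically
   (V <= c x^T Q x), so the feedback attains welfare -V(x(0)); for an arbitrary input,
   either the state eventually has small V or every stage costs a fixed amount, so its
   welfare is at most -V(x(0)).  Since V(x(t)) <= V(x(0)), the total consumption
   x^T K^T H K x is at most sigma_max(K^T H K) sigma_max(P) |x(0)|^2 / sigma_min(P) <= C,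
   and the surplus can be traded away evenly; at zero prices each agent's problem is the
   welfare problem with the other agents' inputs frozen. *)

From HB Require Import structures.
From mathcomp Require Import all_boot all_order all_algebra.
From mathcomp Require Import all_classical all_reals all_analysis.
From mathcomp Require Import lra ring.

Set Implicit Arguments. Unset Strict Implicit. Unset Printing Implicit Defensive.
Import Order.TTheory GRing.Theory Num.Theory.
Import numFieldNormedType.Exports.
Local Open Scope ring_scope.
Local Open Scope classical_set_scope.

Section QuadraticForm.
Variable R : realType.
Implicit Types k l : nat.

Definition bform k (M : 'M[R]_k) (x y : 'cV[R]_k) : R := (x^T *m M *m y) ord0 ord0.

Lemma quad_bform k (M : 'M[R]_k) x : quad M x = bform M x x. Proof. by []. Qed.

Lemma bformDm k (M1 M2 : 'M[R]_k) x y : bform (M1 + M2) x y = bform M1 x y + bform M2 x y.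
Proof. by rewrite /bform mulmxDr mulmxDl mxE. Qed.

Lemma bformDl k (M : 'M[R]_k) x1 x2 y : bform M (x1 + x2) y = bform M x1 y + bform M x2 y.
Proof. by rewrite /bform linearD /= !mulmxDl mxE. Qed.

Lemma bformDr k (M : 'M[R]_k) x y1 y2 : bform M x (y1 + y2) = bform M x y1 + bform M x y2.
Proof. by rewrite /bform mulmxDr mxE. Qed.

Lemma bformZl k (M : 'M[R]_k) c x y : bform M (c *: x) y = c * bform M x y.
Proof. by rewrite /bform linearZ /= -!scalemxAl mxE. Qed.

Lemma bformZr k (M : 'M[R]_k) c x y : bform M x (c *: y) = c * bform M x y.
Proof. by rewrite /bform -scalemxAr mxE. Qed.

Lemma bformNm k (M : 'M[R]_k) x y : bform (- M) x y = - bform M x y.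
Proof. by rewrite /bform mulmxN mulNmx mxE. Qed.

Lemma bform_trmx k (M : 'M[R]_k) x y : bform M x y = bform M^T y x.
Proof.
rewrite /bform; transitivity ((x^T *m M *m y)^T ord0 ord0); first by rewrite [RHS]mxE.
by rewrite !trmx_mul trmxK mulmxA.
Qed.

Lemma bform_sym k (M : 'M[R]_k) x y : M^T = M -> bform M x y = bform M y x.
Proof. by move=> sM; rewrite bform_trmx sM. Qed.

Lemma bform_mulmx k l (F G : 'M[R]_(k, l)) (M : 'M[R]_k) x y :
  bform (F^T *m M *m G) x y = bform M (F *m x) (G *m y).
Proof. by rewrite /bform trmx_mul !mulmxA. Qed.

Lemma quadD k (M : 'M[R]_k) x y :
  quad M (x + y) = quad M x + quad M y + bform M x y + bform M y x.
Proof. rewrite !quad_bform bformDl !bformDr; lra. Qed.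

Lemma quadZ k (M : 'M[R]_k) c x : quad M (c *: x) = c ^+ 2 * quad M x.
Proof. by rewrite !quad_bform bformZl bformZr mulrA expr2. Qed.

Lemma quad0 k (M : 'M[R]_k) : quad M 0 = 0.
Proof. by rewrite -(scale0r 0) quadZ expr2 !mul0r. Qed.

Lemma quadDm k (M1 M2 : 'M[R]_k) x : quad (M1 + M2) x = quad M1 x + quad M2 x.
Proof. exact: bformDm. Qed.

Lemma quadNm k (M : 'M[R]_k) x : quad (- M) x = - quad M x.
Proof. exact: bformNm. Qed.

Lemma quad_mulmx k l (F : 'M[R]_(k, l)) (M : 'M[R]_k) x :
  quad (F^T *m M *m F) x = quad M (F *m x).
Proof. exact: bform_mulmx. Qed.

Lemma normsq_quad k (x : 'cV[R]_k) : normsq x = quad 1%:M x.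
Proof. by rewrite /quad mulmx1 mxE; apply: eq_bigr => j _; rewrite mxE expr2. Qed.

Lemma quad_scalar_mx k (c : R) (x : 'cV[R]_k) : quad c%:M x = c * normsq x.
Proof. by rewrite normsq_quad /quad mul_mx_scalar -scalemxAl mxE mulmx1. Qed.

Lemma normsq_ge0 k (x : 'cV[R]_k) : 0 <= normsq x.
Proof. by apply: sumr_ge0 => j _; rewrite sqr_ge0. Qed.

Lemma normsq_eq0 k (x : 'cV[R]_k) : (normsq x == 0) = (x == 0).
Proof.
apply/idP/eqP => [|->]; last by rewrite /normsq big1 // => j _; rewrite mxE expr0n.
rewrite psumr_eq0 => [/allP x0|j _]; last exact: sqr_ge0.
apply/matrixP => i j; rewrite (ord1 j) mxE.
by have /implyP/(_ isT) := x0 i (mem_index_enum i); rewrite sqrf_eq0 => /eqP.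
Qed.

Lemma normsq0 k : normsq (0 : 'cV[R]_k) = 0.
Proof. by apply/eqP; rewrite normsq_eq0. Qed.

Lemma normsq_gt0 k (x : 'cV[R]_k) : (0 < normsq x) = (x != 0).
Proof. by rewrite lt_def normsq_eq0 normsq_ge0 andbT. Qed.

Lemma normsqZ k c (x : 'cV[R]_k) : normsq (c *: x) = c ^+ 2 * normsq x.
Proof. by rewrite !normsq_quad quadZ. Qed.

Lemma spd_quad_ge0 k (M : 'M[R]_k) x : spd M -> 0 <= quad M x.
Proof.
move=> [_ M_pos]; have [->|x0] := eqVneq x 0; first by rewrite quad0.
exact/ltW/M_pos.
Qed.

Lemma quad_flatmx (M : 'M[R]_0) (x : 'cV[R]_0) : quad M x = 0.
Proof. by rewrite (flatmx0 x) quad0. Qed.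

End QuadraticForm.

Section Rayleigh.
Variable R : realType.
Implicit Types k : nat.

Lemma quad_continuous k (M : 'M[R]_k) : continuous (fun r : 'rV[R]_k => quad M r^T).
Proof.
have -> : (fun r : 'rV[R]_k => quad M r^T) =
    (fun r => \sum_(i < k) \sum_(j < k) r ord0 j * M j i * r ord0 i).
  apply: funext => r; rewrite /quad trmxK mxE; apply: eq_bigr => i _.
  by rewrite !mxE big_distrl; apply: eq_bigr => j _; rewrite ?mxE.
apply: continuous_big => [|i _]; first exact: add_continuous.
apply: continuous_big => [|j _ r]; first exact: add_continuous.
apply: (@continuousM _ _ (fun r : 'rV[R]_k => r ord0 j * M j i) (fun r => r ord0 i));
  last exact: coord_continuous.
apply: (@continuousM _ _ (fun r : 'rV[R]_k => r ord0 j) (fun=> M j i));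
  [exact: coord_continuous | exact: cst_continuous].
Qed.

Lemma quad_max_unit_sphere k (M : 'M[R]_k) : (0 < k)%N ->
  exists2 v : 'cV[R]_k, normsq v = 1 &
    forall x, normsq x = 1 -> quad M x <= quad M v.
Proof.
move=> k_gt0; pose S := [set r : 'rV[R]_k | normsq r^T = 1].
have S_neq0 : S !=set0.
  pose i0 : 'I_k := Ordinal k_gt0.
  exists (\row_j (j == i0)%:R); rewrite /S /= /normsq (bigD1 i0) //= big1.
    by rewrite !mxE eqxx expr1n addr0.
  by move=> j /negbTE ji; rewrite !mxE ji expr0n.
have S_compact : compact S.
  have cube_compact :
      compact [set v : 'rV[R]_k | forall i, v ord0 i \in `[(-1 : R), 1]%R].
    by apply: (@rV_compact _ _ (fun=> `[(-1 : R), 1]%classic)) => _;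
      exact: segment_compact.
  apply: (subclosed_compact _ cube_compact).
  - have normsq_cont : continuous (fun r : 'rV[R]_k => normsq r^T).
      under eq_fun do rewrite normsq_quad.
      exact: quad_continuous.
    exact: (proj1 (continuous_closedP _) normsq_cont _ (@closed_eq R 1)).
  - move=> r Sr i; rewrite in_itv /=.
    have : r ord0 i ^+ 2 <= 1.
      rewrite -Sr /normsq (bigD1 i) //= mxE lerDl.
      by apply: sumr_ge0 => j _; exact: sqr_ge0.
    by move=> ri; apply/andP; split; nra.
have [c Sc cmax] :=
  EVT_max_rV S_neq0 S_compact (continuous_subspaceT (@quad_continuous k M)).
exists c^T; first by move: Sc; rewrite inE.
by move=> x nx; have := cmax x^T; rewrite trmxK; apply; rewrite inE /S /= trmxK.
Qed.

Lemma quad_le_normsq k (M : 'M[R]_k) (c : R) :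
  (forall x, normsq x = 1 -> quad M x <= c) -> forall x, quad M x <= c * normsq x.
Proof.
move=> M_le x; have [->|x_neq0] := eqVneq x 0; first by rewrite quad0 normsq0 mulr0.
have nx_gt0 : 0 < normsq x by rewrite normsq_gt0.
pose s := Num.sqrt (normsq x).
have s_gt0 : 0 < s by rewrite sqrtr_gt0.
have s2 : s ^+ 2 = normsq x by rewrite sqr_sqrtr // ltW.
have xE : x = s *: (s^-1 *: x) by rewrite scalerA mulfV ?gt_eqF // scale1r.
have ny : normsq (s^-1 *: x) = 1.
  apply: (@mulfI _ (s ^+ 2)); first by rewrite expf_neq0 // gt_eqF.
  by rewrite -normsqZ -xE mulr1.
rewrite xE quadZ normsqZ ny mulr1 mulrC.
by apply: ler_wpM2r; [exact: sqr_ge0 | exact: M_le].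
Qed.

Lemma psd_mulmx_eq0 k (N : 'M[R]_k) v : N^T = N -> (forall x, 0 <= quad N x) ->
  quad N v = 0 -> N *m v = 0.
Proof.
move=> sN N_psd qv; set z := N *m v.
have zv : bform N z v = normsq z by rewrite normsq_quad /quad /bform mulmx1 mulmxA.
have vz : bform N v z = normsq z by rewrite (bform_sym _ _ sN).
set s := normsq z; set q := quad N z.
have q_ge0 : 0 <= q by apply: N_psd.
have s_ge0 : 0 <= s by apply: normsq_ge0.
(* expanding 0 <= quad N ((q + 1) v - s z) gives s^2 (q + 2) <= 0 *)
have := N_psd ((q + 1) *: v + (- s) *: z).
rewrite quadD !quadZ !bformZl !bformZr vz zv qv -/q -/s !expr2 => h.
have s0 : s = 0 by apply/eqP; rewrite eq_le s_ge0 andbT; nra.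
by apply/eqP; rewrite -normsq_eq0 -/s s0.
Qed.

Lemma eigenvalue_quad k (M : 'M[R]_k) c : M^T = M -> eigenvalue M c ->
  exists2 x, x != 0 & quad M x = c * normsq x.
Proof.
move=> sM /eigenvalueP [v vM v0]; exists v^T; first by rewrite trmx_eq0.
have Mx : M *m v^T = c *: v^T by rewrite -[M]sM -trmx_mul vM linearZ.
by rewrite /quad -mulmxA Mx -scalemxAr mxE normsq_quad /quad mulmx1.
Qed.

Lemma eigenvalue_quad_max k (M : 'M[R]_k) v : M^T = M -> normsq v = 1 ->
  (forall x, quad M x <= quad M v * normsq x) -> eigenvalue M (quad M v).
Proof.
move=> sM nv M_le; set c := quad M v.
have sN : (c%:M - M)^T = c%:M - M by rewrite linearB /= tr_scalar_mx sM.
have N_psd x : 0 <= quad (c%:M - M) x.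
  by rewrite quadDm quadNm quad_scalar_mx subr_ge0.
have := @psd_mulmx_eq0 _ _ v sN N_psd.
rewrite quadDm quadNm quad_scalar_mx nv mulr1 subrr => /(_ erefl) /eqP.
rewrite mulmxBl subr_eq0 mul_scalar_mx => /eqP Mv.
apply/eigenvalueP; exists v^T; last by rewrite trmx_eq0 -normsq_eq0 nv oner_neq0.
by rewrite -sM -trmx_mul -Mv linearZ.
Qed.

Lemma sigma_max_spec k (M : 'M[R]_k) : (0 < k)%N -> M^T = M ->
  exists v, [/\ normsq v = 1, sigma_max M = quad M v &
                forall x, quad M x <= sigma_max M * normsq x].
Proof.
move=> k_gt0 sM; have [v nv vmax] := quad_max_unit_sphere M k_gt0.
have M_le := quad_le_normsq vmax.
have eig_le c : eigs M c -> c <= quad M v.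
  move=> /(eigenvalue_quad sM) [x x0 qx]; have := M_le x.
  by rewrite qx ler_pM2r // normsq_gt0.
have smax : sigma_max M = quad M v.
  apply/eqP; rewrite eq_le ge_sup //=; last by exists (quad M v); exact: eigenvalue_quad_max.
  by apply: ub_le_sup; [exists (quad M v) | exact: eigenvalue_quad_max].
by exists v; split; rewrite // smax.
Qed.

Lemma eigenvalueN k (M : 'M[R]_k) a : eigenvalue (- M) (- a) = eigenvalue M a.
Proof.
apply/eigenvalueP/eigenvalueP => -[v vM v0]; exists v => //.
  by apply: oppr_inj; rewrite -mulmxN -scaleNr.
by rewrite mulmxN scaleNr vM.
Qed.

Lemma sigma_minN k (M : 'M[R]_k) : sigma_min M = - sigma_max (- M).
Proof.
rewrite /sigma_min /sigma_max /inf; congr (- sup _); apply/seteqP; split.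
  by move=> _ [a Ma <-]; rewrite /eigs /= eigenvalueN.
by move=> a Ma; exists (- a); rewrite ?opprK // /eigs /= -eigenvalueN opprK.
Qed.

Lemma sigma_min_spec k (M : 'M[R]_k) : (0 < k)%N -> M^T = M ->
  exists v, [/\ normsq v = 1, sigma_min M = quad M v &
                forall x, sigma_min M * normsq x <= quad M x].
Proof.
move=> k_gt0 sM; have sN : (- M)^T = - M by rewrite linearN /= sM.
have [v [nv smax M_le]] := sigma_max_spec k_gt0 sN.
exists v; split => [//||x]; first by rewrite sigma_minN smax quadNm opprK.
by rewrite sigma_minN mulNr lerNl -quadNm.
Qed.

Lemma sigma_min_gt0 k (M : 'M[R]_k) : (0 < k)%N -> spd M -> 0 < sigma_min M.
Proof.
move=> k_gt0 [sM M_pos]; have [v [nv -> _]] := sigma_min_spec k_gt0 sM.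
by apply: M_pos; rewrite -normsq_eq0 nv oner_neq0.
Qed.

End Rayleigh.

Section Blocks.
Variable R : realType.

Definition stack (n p : nat) (u : 'I_n -> 'cV[R]_p) : 'cV[R]_(\sum_(i < n) p) :=
  @mxcol R n (fun _ => p) 1 u.

Lemma blk_stack n p (u : 'I_n -> 'cV[R]_p) i : blk (stack u) i = u i.
Proof. exact: mxcolK. Qed.

Lemma stack_blk n p (v : 'cV[R]_(\sum_(i < n) p)) : stack (blk v) = v.
Proof. exact: submxcolK. Qed.

Lemma blkD n p (v w : 'cV[R]_(\sum_(i < n) p)) i : blk (v + w) i = blk v i + blk w i.
Proof. exact: submxcolD. Qed.

Lemma blk_bdiag n p q (M : 'I_n -> 'M[R]_(p, q)) (v : 'cV[R]_(\sum_(i < n) q)) i :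
  blk (bdiag M *m v) i = M i *m blk v i.
Proof.
rewrite -[v]stack_blk /bdiag /stack mul_mxblock_mxrow /blk mxcolK.
rewrite (@mxcolK _ _ (fun _ => p)) (bigD1 i) //= eqxx big1 ?addr0 // => j /negbTE ji.
by rewrite eq_sym ji mul0mx.
Qed.

Lemma quad_bdiag n p (M : 'I_n -> 'M[R]_p) (v : 'cV[R]_(\sum_(i < n) p)) :
  quad (bdiag M) v = \sum_i quad (M i) (blk v i).
Proof.
have dot_blk (w z : 'cV[R]_(\sum_(i < n) p)) : w^T *m z = \sum_i (blk w i)^T *m blk z i.
  by rewrite -{1}[w]stack_blk -{1}[z]stack_blk /stack tr_mxcol mul_mxrow_mxcol.
rewrite /quad -mulmxA dot_blk summxE; apply: eq_bigr => i _.
by rewrite blk_bdiag mulmxA.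
Qed.

Lemma trmx_bdiag n p (M : 'I_n -> 'M[R]_p) : (bdiag M)^T = bdiag (fun i => (M i)^T).
Proof.
rewrite /bdiag tr_mxblock; apply: eq_mxblock => i j.
by case: eqVneq => [->|ij]; rewrite ?eqxx // ?trmx0.
Qed.

Lemma blk_neq0 n p (v : 'cV[R]_(\sum_(i < n) p)) : v != 0 -> exists i, blk v i != 0.
Proof.
move=> v0; apply/existsP; apply: contraR v0 => /existsPn blk0.
rewrite -[v]stack_blk (_ : blk v = fun _ => 0); first exact/eqP/mxcol0.
by apply: funext => i; apply/eqP; rewrite -[_ == _]negbK blk0.
Qed.

Lemma spd_bdiag n p (M : 'I_n -> 'M[R]_p) : (forall i, spd (M i)) -> spd (bdiag M).
Proof.
move=> M_spd; split.
  by rewrite trmx_bdiag; congr bdiag; apply: funext => i; case: (M_spd i).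
move=> v v0; have [i vi] := blk_neq0 v0.
rewrite quad_bdiag (bigD1 i) //=; apply: ltr_pwDl; first by case: (M_spd i) => _; apply.
by apply: sumr_ge0 => j _; apply: spd_quad_ge0.
Qed.

Lemma blk_traj_bdiag n d m (A : 'I_n -> 'M[R]_d) (B : 'I_n -> 'M[R]_(d, m))
    (x0 : 'cV[R]_(\sum_(i < n) d)) (u : 'I_n -> nat -> 'cV[R]_m) i t :
  blk (traj (bdiag A) (bdiag B) x0 (fun t => stack (u^~ t)) t) i =
  traj (A i) (B i) (blk x0 i) (u i) t.
Proof. by elim: t => [//|t IH] /=; rewrite blkD !blk_bdiag IH blk_stack. Qed.

End Blocks.

Lemma traj_feedback (R : realType) N M (A : 'M[R]_N) (B : 'M[R]_(N, M))
    (K : 'M[R]_(M, N)) x0 t :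
  traj A B x0 (fun s => K *m ((A + B *m K) ^+ s *m x0)) t = (A + B *m K) ^+ t *m x0.
Proof.
elim: t => [|t IH] /=; first by rewrite expr0 mul1mx.
by rewrite IH exprS -mulmxE -mulmxA mulmxDl -mulmxA.
Qed.

Lemma spd_unitmx (R : realType) N M (B : 'M[R]_(N, M)) (Rm : 'M[R]_M) (P : 'M[R]_N) :
  spd Rm -> spd P -> Rm + B^T *m P *m B \in unitmx.
Proof.
move=> [_ R_pos] P_spd; rewrite unitmxE unitfE; apply/negP => /det0P [v v0 vS].
have : quad (Rm + B^T *m P *m B) v^T = 0 by rewrite /quad trmxK vS mul0mx mxE.
rewrite quadDm quad_mulmx; apply/eqP; rewrite gt_eqF //.
by apply: ltr_pwDl; [apply: R_pos; rewrite trmx_eq0 | exact: spd_quad_ge0].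
Qed.

Section Riccati.
Variables (R : realType) (N M : nat) (A : 'M[R]_N) (B : 'M[R]_(N, M))
  (Q : 'M[R]_N) (Rm : 'M[R]_M) (P : 'M[R]_N).
Hypotheses (P_sym : P^T = P) (R_sym : Rm^T = Rm)
  (S_unit : Rm + B^T *m P *m B \in unitmx) (dare : DARE A B Q Rm P).

Let S := Rm + B^T *m P *m B.
Let K := gainK A B Rm P.

Lemma mulmx_gainK : S *m K = - (B^T *m P *m A).
Proof. by rewrite /K /gainK mulmxN !mulmxA -/S mulmxV // mul1mx. Qed.

Lemma gainK_cross : Rm *m K + B^T *m P *m (A + B *m K) = 0.
Proof.
rewrite mulmxDr addrCA [B^T *m P *m (B *m K)]mulmxA -mulmxDl.
by rewrite mulmx_gainK subrr.
Qed.

Lemma dare_closed_loop :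
  P = Q + K^T *m Rm *m K + (A + B *m K)^T *m P *m (A + B *m K).
Proof.
have KSK : K^T *m Rm *m K + K^T *m B^T *m P *m B *m K = - (K^T *m B^T *m P *m A).
  rewrite -!mulmxA -mulmxDr !mulmxA -mulmxDl -/S -mulmxA mulmx_gainK.
  by rewrite mulmxN !mulmxA.
have APBK : A^T *m P *m B *m K =
    - (A^T *m P *m B *m invmx (B^T *m P *m B + Rm) *m B^T *m P *m A).
  by rewrite /K /gainK mulmxN !mulmxA addrC.
rewrite {1}dare [(A + B *m K)^T]raddfD /= trmx_mul !mulmxDl !mulmxDr !mulmxA -APBK.
move: KSK.
set a1 := K^T *m Rm *m K; set a2 := A^T *m P *m A; set a3 := A^T *m P *m B *m K.
set a4 := K^T *m B^T *m P *m A; set a5 := K^T *m B^T *m P *m B *m K.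
by move=> KSK; apply/matrixP => i j; move/matrixP: KSK => /(_ i j); rewrite !mxE; lra.
Qed.

Lemma dare_stage_cost x u :
  quad Q x + quad Rm u =
  quad P x - quad P (A *m x + B *m u) + quad S (u - K *m x).
Proof.
have [w ->] : exists w, u = K *m x + w by exists (u - K *m x); rewrite addrC subrK.
have -> : A *m x + B *m (K *m x + w) = (A + B *m K) *m x + B *m w.
  by rewrite mulmxDr mulmxDl mulmxA addrA.
rewrite [K *m x + w - _]addrC addKr !quadD quadDm quad_mulmx.
rewrite (bform_sym (K *m x) w R_sym) (bform_sym ((A + B *m K) *m x) (B *m w) P_sym).
have cross : bform Rm w (K *m x) + bform P (B *m w) ((A + B *m K) *m x) = 0.
  have -> : bform Rm w (K *m x) + bform P (B *m w) ((A + B *m K) *m x) =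
      (w^T *m (Rm *m K + B^T *m P *m (A + B *m K)) *m x) ord0 ord0.
    by rewrite mulmxDr mulmxDl mxE /bform trmx_mul !mulmxA.
  by rewrite gainK_cross mulmx0 mul0mx mxE.
have PV : quad P x = quad Q x + quad Rm (K *m x) + quad P ((A + B *m K) *m x).
  by rewrite {1}dare_closed_loop !quadDm !quad_mulmx.
lra.
Qed.

End Riccati.

Section Spectral.
Variable R : realType.

Lemma quad_sublevel_bound k (P W : 'M[R]_k) (x0 x : 'cV[R]_k) (C : R) :
  spd P -> W^T = W -> 0 < C ->
  normsq x0 <= C * sigma_min P / (sigma_max P * sigma_max W) ->
  quad P x <= quad P x0 -> quad W x <= C.
Proof.
move=> P_spd W_sym C_gt0; case: k P W x0 x P_spd W_sym => [|k] P W x0 x P_spd W_sym.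
  by move=> _ _; rewrite quad_flatmx ltW.
move=> x0_le Px_le; have k_gt0 := ltn0Sn k.
have lo_gt0 := sigma_min_gt0 k_gt0 P_spd.
have [v [nv lo_v lo_le]] := sigma_min_spec k_gt0 (proj1 P_spd).
have [_ [_ _ hi_ge]] := sigma_max_spec k_gt0 (proj1 P_spd).
have [_ [_ _ W_le]] := sigma_max_spec k_gt0 W_sym.
move: x0_le lo_gt0 lo_v lo_le hi_ge W_le.
set lo := sigma_min P; set hi := sigma_max P; set w := sigma_max W.
move=> x0_le lo_gt0 lo_v lo_le hi_ge W_le.
have lo_hi : lo <= hi by have := hi_ge v; rewrite nv mulr1 -lo_v.
have nx := normsq_ge0 x; have Wx := W_le x.
have [w_le0|w_gt0] := lerP w 0.
  have : w * normsq x <= 0 by rewrite mulr_le0_ge0.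
  lra.
have hw_gt0 : 0 < hi * w by rewrite mulr_gt0 // (lt_le_trans lo_gt0 lo_hi).
rewrite ler_pdivlMr // in x0_le.
have Px := lo_le x; have Px0 := hi_ge x0.
(* lo |x|^2 <= V x <= V x0 <= hi |x0|^2, then multiply by w *)
have : lo * (w * normsq x) <= lo * C.
  have -> : lo * (w * normsq x) = w * (lo * normsq x) by ring.
  apply: le_trans (_ : w * (hi * normsq x0) <= _).
    by apply: ler_wpM2l; [exact: ltW | lra].
  have -> : w * (hi * normsq x0) = normsq x0 * (hi * w) by ring.
  by rewrite [lo * C]mulrC.
by rewrite ler_pM2l // => wx; lra.
Qed.

Lemma spd_quad_dominated k (P Q : 'M[R]_k) : spd P -> spd Q ->
  exists2 c, 1 <= c & forall x, quad P x <= c * quad Q x.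
Proof.
case: k P Q => [|k] P Q P_spd Q_spd.
  by exists 1 => // x; rewrite !quad_flatmx mulr0.
have k_gt0 := ltn0Sn k.
have loQ_gt0 := sigma_min_gt0 k_gt0 Q_spd.
have [_ [_ _ P_le]] := sigma_max_spec k_gt0 (proj1 P_spd).
have [_ [_ _ Q_ge]] := sigma_min_spec k_gt0 (proj1 Q_spd).
set c := Num.max 1 (sigma_max P / sigma_min Q).
have c_ge1 : 1 <= c by rewrite le_max lexx.
exists c => // x; apply: le_trans (P_le x) _.
apply: le_trans (_ : c * (sigma_min Q * normsq x) <= _); last first.
  by apply: ler_wpM2l; [exact: le_trans c_ge1 | exact: Q_ge].
rewrite mulrA; apply: ler_wpM2r; first exact: normsq_ge0.
by rewrite -ler_pdivrMr // le_max lexx orbT.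
Qed.

End Spectral.

Section InfiniteSums.
Variable R : realType.

Lemma nondecreasing_partial_sums (f : nat -> R) : (forall t, 0 <= f t) ->
  nondecreasing_seq (fun T => \sum_(t < T) f t).
Proof.
move=> f_ge0 T0 T le_T0T.
by have := @nondecreasing_series R f predT 0 (fun t _ _ => f_ge0 t) T0 T le_T0T;
  rewrite !big_mkord.
Qed.

Lemma nonincreasing_partial_sums (f : nat -> R) : (forall t, f t <= 0) ->
  nonincreasing_seq (fun T => \sum_(t < T) f t).
Proof.
move=> f_le0 T0 T le_T0T.
have Nf_ge0 t : 0 <= - f t by rewrite oppr_ge0.
by have := nondecreasing_partial_sums Nf_ge0 le_T0T; rewrite !sumrN lerN2.
Qed.

Lemma objective_le (g : nat -> R) (c : R) :
  (forall e, 0 < e -> exists T0, forall T, (T0 <= T)%N -> \sum_(t < T) g t <= c + e) ->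
  (objective g <= c%:E)%E.
Proof.
move=> g_le; apply/lee_addgt0Pr => e e_gt0; have [T0 T0_le] := g_le e e_gt0.
apply: ge_ereal_inf.
exists (ereal_sup [set (\sum_(t < T) g t)%:E | T in [set T | (T0 <= T)%N]]).
  by exists [set T | (T0 <= T)%N] => //; exact: nbhs_infty_ge.
by apply: ge_ereal_sup => _ [T /= le_T0T <-]; rewrite -EFinD lee_fin T0_le.
Qed.

Lemma objective_sums_to (g : nat -> R) (l : R) : sums_to g l -> objective g = l%:E.
Proof.
move=> g_l; have : (fun T => (\sum_(t < T) g t)%:E) @ \oo --> l%:E.
  by apply: cvg_EFin; [exact: nearW | exact: g_l].
by move/cvg_limn_einf_sup => [].
Qed.

End InfiniteSums.

Section SocialWelfare.
Variables (R : realType) (n d m : nat)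
  (A_ : 'I_n -> 'M[R]_d) (B_ : 'I_n -> 'M[R]_(d, m))
  (Q_ : 'I_n -> 'M[R]_d) (R_ : 'I_n -> 'M[R]_m) (H_ : 'I_n -> 'M[R]_m)
  (a : 'I_n -> nat -> R) (P : 'M[R]_(\sum_(i < n) d))
  (x0 : 'cV[R]_(\sum_(i < n) d)).
Hypotheses (Q_spd : forall i, spd (Q_ i)) (R_spd : forall i, spd (R_ i))
  (P_spd : spd P) (dare : DARE (bdiag A_) (bdiag B_) (bdiag Q_) (bdiag R_) P).

Local Notation bA := (bdiag A_).
Local Notation bB := (bdiag B_).
Local Notation bQ := (bdiag Q_).
Local Notation bR := (bdiag R_).
Local Notation K := (gainK bA bB bR P).
Local Notation S := (bR + bB^T *m P *m bB).

Let bQ_spd : spd bQ := spd_bdiag Q_spd.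
Let bR_spd : spd bR := spd_bdiag R_spd.

Definition state (U : nat -> 'cV[R]_(\sum_(i < n) m)) : nat -> 'cV[R]_(\sum_(i < n) d) :=
  traj bA bB x0 U.

Definition stage_cost U t : R := quad bQ (state U t) + quad bR (U t).

Definition stacked (u : 'I_n -> nat -> 'cV[R]_m) t : 'cV[R]_(\sum_(i < n) m) :=
  stack (u^~ t).

Lemma util_le0 i x u : util Q_ R_ i x u <= 0.
Proof.
by have := spd_quad_ge0 x (Q_spd i); have := spd_quad_ge0 u (R_spd i); rewrite /util; lra.
Qed.

Lemma SW_stageE u t : SW_stage A_ B_ Q_ R_ x0 u t = - stage_cost (stacked u) t.
Proof.
rewrite /SW_stage /stage_cost !quad_bdiag opprD -!sumrN -big_split /=.
apply: eq_bigr => i _; rewrite /util /xstate -blk_traj_bdiag /stacked blk_stack; lra.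
Qed.

Lemma stage_cost_ge0 U t : 0 <= stage_cost U t.
Proof. by rewrite addr_ge0 // spd_quad_ge0. Qed.

Lemma stage_cost_telescope U T :
  \sum_(t < T) stage_cost U t =
  quad P x0 - quad P (state U T) + \sum_(t < T) quad S (U t - K *m state U t).
Proof.
have step := dare_stage_cost (proj1 P_spd) (proj1 bR_spd) (spd_unitmx bB bR_spd P_spd) dare.
elim: T => [|T IH]; first by rewrite !big_ord0 /state /= subrr add0r.
by rewrite !big_ord_recr /= IH /stage_cost step /state /=; lra.
Qed.

Lemma stage_cost_sum_ge U T : quad P x0 - quad P (state U T) <= \sum_(t < T) stage_cost U t.
Proof.
rewrite stage_cost_telescope lerDl; apply: sumr_ge0 => t _.
by rewrite quadDm quad_mulmx addr_ge0 // spd_quad_ge0.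
Qed.

(* Either the state reaches the region where V = x^T P x is below e, or every
   stage costs a fixed positive amount; both force the partial sums up to V(x0) - e. *)
Lemma stage_cost_sum_eventually U e : 0 < e ->
  exists T0, forall T, (T0 <= T)%N -> quad P x0 - e <= \sum_(t < T) stage_cost U t.
Proof.
move=> e_gt0.
suff [T0 T0_ge] : exists T0, quad P x0 - e <= \sum_(t < T0) stage_cost U t.
  exists T0 => T le_T0T; apply: le_trans T0_ge _.
  exact: nondecreasing_partial_sums (stage_cost_ge0 U) _ _ le_T0T.
have [c c_ge1 P_le] := spd_quad_dominated P_spd bQ_spd.
have c_gt0 : 0 < c by apply: lt_le_trans c_ge1.
have ec_gt0 : 0 < e / c by rewrite divr_gt0.
have [[T QT]|QT] := pselect (exists T, quad bQ (state U T) <= e / c).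
  exists T; have := stage_cost_sum_ge U T; have := P_le (state U T).
  have : c * quad bQ (state U T) <= e by rewrite -ler_pdivlMl // mulrC.
  lra.
have cost_ge t : e / c <= stage_cost U t.
  have := spd_quad_ge0 (U t) bR_spd; rewrite /stage_cost.
  have : e / c < quad bQ (state U t) by rewrite ltNge; apply/negP => Qt; apply: QT; exists t.
  lra.
have V0_ge0 := spd_quad_ge0 x0 P_spd.
pose T0 := Num.Def.archi_bound (quad P x0 / (e / c)).
exists T0.
have T0_gt : quad P x0 / (e / c) < T0%:R.
  by apply: archi_boundP; rewrite divr_ge0 // ltW.
have : \sum_(t < T0) (e / c) <= \sum_(t < T0) stage_cost U t by apply: ler_sum => t _.
rewrite sumr_const card_ord -mulr_natl; rewrite ltr_pdivrMr // in T0_gt.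
lra.
Qed.

Lemma SW_psum_eventually_le u e : 0 < e ->
  exists T0, forall T, (T0 <= T)%N -> \sum_(t < T) SW_stage A_ B_ Q_ R_ x0 u t <= - quad P x0 + e.
Proof.
move=> e_gt0; have [T0 T0_le] := stage_cost_sum_eventually (stacked u) e_gt0.
exists T0 => T /T0_le.
rewrite (eq_bigr (fun t : 'I_T => _) (fun t _ => SW_stageE u t)) sumrN; lra.
Qed.

Lemma SW_objective_le u : (objective (SW_stage A_ B_ Q_ R_ x0 u) <= (- quad P x0)%:E)%E.
Proof. exact/objective_le/SW_psum_eventually_le. Qed.

Definition xcl t := (bA + bB *m K) ^+ t *m x0.
Definition ustar (i : 'I_n) (t : nat) := blk (K *m xcl t) i.

Lemma stacked_ustar t : stacked ustar t = K *m xcl t.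
Proof. exact: stack_blk. Qed.

Lemma state_ustar : state (stacked ustar) = xcl.
Proof.
have -> : stacked ustar = fun t => K *m xcl t by apply: funext => t; exact: stacked_ustar.
by apply: funext => t; exact: traj_feedback.
Qed.

Lemma xstate_ustar i t : xstate A_ B_ x0 i (ustar i) t = blk (xcl t) i.
Proof. by rewrite /xstate -blk_traj_bdiag -/(state _ t) state_ustar. Qed.

Lemma stage_cost_ustar_sum T :
  \sum_(t < T) stage_cost (stacked ustar) t = quad P x0 - quad P (xcl T).
Proof.
rewrite stage_cost_telescope state_ustar [X in _ + X]big1 ?addr0 // => t _.
by rewrite stacked_ustar subrr quad0.
Qed.

Lemma value_xcl_step t : quad P (xcl t.+1) <= quad P (xcl t) - quad bQ (xcl t).
Proof.
have := stage_cost_ustar_sum t.+1; rewrite big_ord_recr /= stage_cost_ustar_sum.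
rewrite /stage_cost state_ustar; have := spd_quad_ge0 (stacked ustar t) bR_spd; lra.
Qed.

Lemma value_xcl_le t : quad P (xcl t) <= quad P x0.
Proof.
elim: t => [|t IH]; first by rewrite /xcl expr0 mul1mx.
by have := value_xcl_step t; have := spd_quad_ge0 (xcl t) bQ_spd; lra.
Qed.

(* With V <= c x^T Q x, each step removes at least a fraction 1/c of V. *)
Lemma value_xcl_cvg0 : (fun t => quad P (xcl t)) @ \oo --> 0.
Proof.
have [c c_ge1 P_le] := spd_quad_dominated P_spd bQ_spd.
have c_gt0 : 0 < c by apply: lt_le_trans c_ge1.
set r := 1 - c^-1.
have r_ge0 : 0 <= r by rewrite subr_ge0 invf_le1.
have r_lt1 : r < 1 by rewrite /r ltrBlDr ltrDl invr_gt0.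
have V_geom t : quad P (xcl t) <= geometric (quad P x0) r t.
  elim: t => [|t IH] /=; first by rewrite expr0 mulr1 /xcl expr0 mul1mx.
  have : c^-1 * quad P (xcl t) <= quad bQ (xcl t).
    by rewrite ler_pdivrMl // mulrC P_le.
  have := value_xcl_step t; rewrite exprS mulrCA => h1 h2.
  apply: le_trans (_ : r * quad P (xcl t) <= _); first by rewrite /r mulrBl mul1r; lra.
  exact: ler_wpM2l.
apply: (@squeeze_cvgr _ _ _ _ (cst 0) (geometric (quad P x0) r)).
- by apply: nearW => t; rewrite spd_quad_ge0 // V_geom.
- exact: cvg_cst.
- by apply: cvg_geometric; rewrite ger0_norm.
Qed.

Lemma SW_psum_ustar T :
  \sum_(t < T) SW_stage A_ B_ Q_ R_ x0 ustar t = quad P (xcl T) - quad P x0.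
Proof.
rewrite (eq_bigr (fun t : 'I_T => _) (fun t _ => SW_stageE ustar t)).
by rewrite sumrN stage_cost_ustar_sum opprB.
Qed.

Lemma SW_sums_ustar : sums_to (SW_stage A_ B_ Q_ R_ x0 ustar) (- quad P x0).
Proof.
rewrite /sums_to (funext SW_psum_ustar).
by rewrite -[X in _ --> X]sub0r; apply: cvgB; [exact: value_xcl_cvg0 | exact: cvg_cst].
Qed.

Lemma consumption_ustar (Cmin : R) : (forall i, spd (H_ i)) -> 0 < Cmin ->
  normsq x0 <= Cmin * sigma_min P / (sigma_max P * sigma_max (K^T *m bdiag H_ *m K)) ->
  forall t, \sum_i cons H_ i (ustar i t) <= Cmin.
Proof.
move=> H_spd Cmin_gt0 x0_le t.
have -> : \sum_i cons H_ i (ustar i t) = quad (K^T *m bdiag H_ *m K) (xcl t).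
  by rewrite quad_mulmx quad_bdiag.
apply: (quad_sublevel_bound P_spd _ Cmin_gt0 x0_le (value_xcl_le t)).
by rewrite !trmx_mul trmxK mulmxA (proj1 (spd_bdiag H_spd)).
Qed.

(* The surplus resources, nonnegative at each time, are traded away evenly. *)
Lemma ustar_admissible (Cmin : R) : (forall i, spd (H_ i)) -> 0 < Cmin ->
  (forall t, Cmin <= \sum_(i < n) a i t) ->
  normsq x0 <= Cmin * sigma_min P / (sigma_max P * sigma_max (K^T *m bdiag H_ *m K)) ->
  exists e, SW_admissible H_ a ustar e.
Proof.
move=> H_spd Cmin_gt0 Cmin_le x0_le.
have n_gt0 : (0 < n)%N.
  by case: n a Cmin_le => [|n'] a' Ca //; have := Ca 0%N; rewrite big_ord0; lra.
have nR_neq0 : n%:R != 0 :> R by rewrite pnatr_eq0 -lt0n.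
pose s t := \sum_(j < n) (a j t - cons H_ j (ustar j t)).
have s_ge0 t : 0 <= s t.
  rewrite /s sumrB subr_ge0.
  exact: le_trans (consumption_ustar H_spd Cmin_gt0 x0_le t) (Cmin_le t).
exists (fun i t => a i t - cons H_ i (ustar i t) - s t / n%:R); split => [i t|t].
  by rewrite lerBlDr lerDl divr_ge0 ?ler0n.
rewrite sumrB -/(s t) sumr_const card_ord -[s t / _ *+ n]mulr_natr.
by rewrite divfK // subrr.
Qed.

Lemma SW_value_ustar e : SW_admissible H_ a ustar e ->
  SW_value A_ B_ Q_ R_ H_ a x0 = (- quad P x0)%:E.
Proof.
move=> adm; apply/eqP; rewrite eq_le; apply/andP; split.
  by apply: ge_ereal_sup => _ [u _ <-]; exact: SW_objective_le.
rewrite -(objective_sums_to SW_sums_ustar).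
by apply: ereal_sup_ubound; exists ustar => //; exists e.
Qed.

Section Agent.
Variable i : 'I_n.

Definition own_util t : R := util Q_ R_ i (xstate A_ B_ x0 i (ustar i) t) (ustar i t).
Definition own_psum T : R := \sum_(t < T) own_util t.
Definition others_util t : R :=
  \sum_(j | j != i) util Q_ R_ j (xstate A_ B_ x0 j (ustar j) t) (ustar j t).
Definition others_psum T : R := \sum_(t < T) others_util t.

Lemma SW_stage_split u t : (forall j, j != i -> u j = ustar j) ->
  SW_stage A_ B_ Q_ R_ x0 u t =
  util Q_ R_ i (xstate A_ B_ x0 i (u i) t) (u i t) + others_util t.
Proof.
by move=> u_eq; rewrite /SW_stage (bigD1 i) //=; congr (_ + _); apply: eq_bigr => j /u_eq ->.
Qed.

Lemma others_util_le0 t : others_util t <= 0.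
Proof. by apply: sumr_le0 => j _; exact: util_le0. Qed.

Lemma own_others_psum T : own_psum T + others_psum T = quad P (xcl T) - quad P x0.
Proof.
rewrite -SW_psum_ustar -big_split; apply: eq_bigr => t _ /=.
by rewrite (@SW_stage_split ustar).
Qed.

Lemma own_psum_cvg : own_psum @ \oo --> inf (range own_psum).
Proof.
apply: nonincreasing_cvgn; first exact: nonincreasing_partial_sums (fun t => util_le0 _ _ _).
exists (- quad P x0) => _ [T _ <-]; have := own_others_psum T.
have : others_psum T <= 0 by apply: sumr_le0 => t _; exact: others_util_le0.
have := spd_quad_ge0 (xcl T) P_spd; lra.
Qed.

Lemma others_psum_ge T : - quad P x0 - inf (range own_psum) <= others_psum T.
Proof.
have others_cvg : others_psum @ \oo --> - quad P x0 - inf (range own_psum).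
  have -> : others_psum = fun T => quad P (xcl T) - quad P x0 - own_psum T.
    by apply: funext => T'; rewrite -own_others_psum addrC addKr.
  apply: cvgB; last exact: own_psum_cvg.
  by rewrite -[X in _ --> X]sub0r; apply: cvgB; [exact: value_xcl_cvg0 | exact: cvg_cst].
have others_noninc : nonincreasing_seq others_psum.
  exact: nonincreasing_partial_sums others_util_le0.
by have := nonincreasing_cvgn_ge others_noninc (cvgP _ others_cvg) T;
  rewrite (cvg_lim _ others_cvg).
Qed.

(* With zero prices, agent i faces the welfare problem with the others' inputs fixed. *)
Lemma agent_optimal_ustar e : agent_admissible H_ a i (ustar i) e ->
  agent_optimal A_ B_ Q_ R_ H_ a x0 (fun _ => 0) i (ustar i) e.
Proof.
move=> adm; split => //; exists (inf (range own_psum)); split.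
  rewrite /sums_to; under eq_fun do under eq_bigr do rewrite /agent_stage mul0r addr0.
  exact: own_psum_cvg.
move=> ui ei _; pose u j := if j == i then ui else ustar j.
apply: objective_le => eps /(SW_psum_eventually_le u) [T0 T0_le].
exists T0 => T /T0_le SW_le; have := others_psum_ge T.
have -> : \sum_(t < T) agent_stage A_ B_ Q_ R_ x0 (fun=> 0) i ui ei t =
          \sum_(t < T) SW_stage A_ B_ Q_ R_ x0 u t - others_psum T.
  rewrite /others_psum -sumrB; apply: eq_bigr => t _.
  rewrite (@SW_stage_split u t); last by move=> j /negbTE ji; rewrite /u ji.
  by rewrite /agent_stage mul0r addr0 /u eqxx addrK.
lra.
Qed.

End Agent.

End SocialWelfare.

Unset Implicit Arguments.

Theorem theorem9 (R : realType) (n d m : nat)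
  (A_ : 'I_n -> 'M[R]_d) (B_ : 'I_n -> 'M[R]_(d, m))
  (Q_ : 'I_n -> 'M[R]_d) (R_ : 'I_n -> 'M[R]_m) (H_ : 'I_n -> 'M[R]_m)
  (a : 'I_n -> nat -> R) (Cmin : R) (P : 'M[R]_(\sum_(i < n) d))
  (x0 : 'cV[R]_(\sum_(i < n) d)) :
  (forall i, spd (Q_ i)) -> (forall i, spd (R_ i)) -> (forall i, spd (H_ i)) ->
  controllable (bdiag A_) (bdiag B_) ->
  0 < Cmin -> (forall t, Cmin <= \sum_(i < n) a i t) ->
  spd P -> DARE (bdiag A_) (bdiag B_) (bdiag Q_) (bdiag R_) P ->
  let K := gainK (bdiag A_) (bdiag B_) (bdiag R_) P in
  let KHK := K^T *m bdiag H_ *m K in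
  KHK != 0 ->
  normsq x0 <= Cmin * sigma_min P / (sigma_max P * sigma_max KHK) ->
  (* closed-loop state x(t) = (A + B K)^t x(0) and feedback input u*(t) = K x(t) *)
  let xcl := fun t : nat => (bdiag A_ + bdiag B_ *m K) ^+ t *m x0 in
  let ustar := fun (i : 'I_n) (t : nat) => blk (K *m xcl t) i in
  (* the stacked state under u* is indeed xcl *)
  (forall i t, xstate A_ B_ x0 i (ustar i) t = blk (xcl t) i) /\
  (* (i) *)
  SW_feasible A_ B_ Q_ R_ H_ a x0 /\
  (exists e, SW_optimal A_ B_ Q_ R_ H_ a x0 ustar e) /\
  (* (ii) *)
  (exists e, competitive_eq A_ B_ Q_ R_ H_ a x0 (fun _ => 0) ustar e).
Proof.
(* Controllability only guarantees that the stabilizing P exists, which is assumed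
   here, and KHK != 0 only keeps the radius of X_0 from dividing by zero. *)
move=> Q_spd R_spd H_spd _ Cmin_gt0 Cmin_le P_spd dare K KHK _ x0_le xcl ustar.
have [e adm] := ustar_admissible Q_spd R_spd P_spd dare H_spd Cmin_gt0 Cmin_le x0_le.
split; first exact: xstate_ustar.
split.
  split; first by exists ustar, e.
  by rewrite (SW_value_ustar Q_spd R_spd P_spd dare adm).
split.
  exists e; split => //; exists (- quad P x0); split; first exact: SW_sums_ustar.
  by move=> u' e' _; exact: SW_objective_le.
exists e; split; last by case: adm.
by move=> i; apply: agent_optimal_ustar => // t; case: adm => e_le _; exact: e_le.
Qed.
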